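(* Fix integers $0\le k\le n$ and $x\in\mathbb Z_{\ge0}$, and let $S$ have law $\mathbf P^n_x$. For $0\le i\le k$ and $y\ge0$ let $f(y,i)=\mathbf E^{n-i}_y[S_{k-i}]$. Then $M_i=f(S_i,i)$, $0\le i\le k$, is a martingale with respect to the natural filtration of $S$, and $|M_{i+1}-M_i|\le2$ for $0\le i\le k-1$. When $k=n$ one has explicitly $f(y,i)=-1+\frac{y+1}{\psi(y;n-i)}$.
   Context: Let $p_n(w)$ be the probability that simple symmetric random walk on $\mathbb Z$ started at $0$ is at $w$ at time $n$. For $x,y\in\mathbb Z_{\ge0}$, $p^{(1/2)}_n(x,y)=p_n(x-y)-p_n(x+y+2)$ and $\psi(x;n)=\sum_{y\ge0}p^{(1/2)}_n(x,y)$. $\mathbf P^N_y$ is the uniform probability measure on paths $(s_0,\dots,s_N)\in\mathbb Z_{\ge0}^{N+1}$ with $s_0=y$ and $|s_{i+1}-s_i|=1$; $S$ is its coordinate process and $\mathbf E^N_y$ its expectation. *)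

From HB Require Import structures.
From mathcomp Require Import all_boot all_order all_algebra.
Set Implicit Arguments. Unset Strict Implicit. Unset Printing Implicit Defensive.
Import Order.TTheory GRing.Theory Num.Theory.
Local Open Scope ring_scope.

(* p_n(w): probability that SRW on Z started at 0 is at w at time n. *)
Definition pn (n : nat) (w : int) : rat :=
  if odd (n + `|w|%N) || (n < `|w|%N)%N then 0
  else ('C(n, (n + `|w|%N)./2))%:R / (2%:R ^+ n).

Definition phalf (n x y : nat) : rat :=
  pn n (x%:Z - y%:Z) - pn n (x%:Z + y%:Z + 2).

(* psi(x;n) = sum_{y>=0} p^{(1/2)}_n(x,y); terms vanish for y > x+n. *)
Definition psi (x n : nat) : rat := \sum_(0 <= y < x + n + 1) phalf n x y.

(* All paths (s_0,...,s_N) in Z_{>=0}^{N+1} with s_0 = y and |s_{i+1}-s_i| = 1,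
   listed as sequences of length N+1. *)
Fixpoint walks (N y : nat) : seq (seq nat) :=
  match N with
  | 0 => [:: [:: y]]
  | N'.+1 => [seq y :: w | w <- walks N' y.+1]
             ++ (if y is y'.+1 then [seq y :: w | w <- walks N' y'] else [::])
  end.

Definition Ewalk (N y : nat) (F : seq nat -> rat) : rat :=
  (\sum_(w <- walks N y) F w) / (size (walks N y))%:R.

Definition Scoord (m : nat) (w : seq nat) : nat := nth 0%N w m.

(* Conditional expectation under P^N_y of F given (S_0,...,S_{size p - 1}) = p. *)
Definition cond_exp (N y : nat) (F : seq nat -> rat) (p : seq nat) : rat :=
  (\sum_(w <- walks N y | take (size p) w == p) F w)
    / (count (fun w => take (size p) w == p) (walks N y))%:R.

(* (M_i)_{0<=i<=k} is a martingale w.r.t. the natural filtration of S under P^n_x: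
   M_i is a function of (S_0..S_i), and E[M_{i+1} | S_0..S_i] = M_i. *)
Definition martingale_walks (n x k : nat) (M : nat -> seq nat -> rat) : Prop :=
  (forall i w w', (i <= k)%N -> w \in walks n x -> w' \in walks n x ->
     take i.+1 w = take i.+1 w' -> M i w = M i w')
  /\ (forall i w, (i < k)%N -> w \in walks n x ->
     cond_exp n x (M i.+1) (take i.+1 w) = M i w).

Definition fexp (n k y i : nat) : rat :=
  Ewalk (n - i) y (fun w => (Scoord (k - i) w)%:R).

From HB Require Import structures.
From mathcomp Require Import all_boot all_order all_algebra.
From mathcomp Require Import zify ring lra.
Import Order.TTheory GRing.Theory Num.Theory.
Local Open Scope ring_scope.

(* Write N_m(y) for the number of nonnegative walks of length m started at y and
   f_m^t(y) = E^m_y[S_t], so that the function of the statement is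
   f(y,i) = f_{n-i}^{k-i}(y).  Everything rests on the first-step decomposition
   of walks: a walk of length m+1 from y is y followed by a walk of length m
   from y+1 or from y-1 (the latter only if y > 0).  This gives
     N_{m+1}(y) = N_m(y+1) + N_m(y-1),
     f_{m+1}^{t+1}(y) = (N_m(y+1) f_m^t(y+1) + N_m(y-1) f_m^t(y-1)) / N_{m+1}(y).
   1. Martingale property: conditioning the uniform walk on its first i+1
      positions leaves a uniform walk of length n-i from S_i, so E[M_{i+1}|F_i]
      is exactly the right-hand side above, i.e. M_i.
   2. Increments: N_m is log-concave along steps of 2 (it is "concave" in a
      reflected sense), and by induction on t this forces
      0 <= f_m^t(z+2) - f_m^t(z) <= 2; since M_i is a convex combination of the
      two possible values of M_{i+1}, which differ by at most 2, |M_{i+1}-M_i| <= 2.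
   3. Case k = n: summing the recursion gives sum_w (S_m + 1) = (y+1) 2^m, and the
      reflection identity N_m(y) = 2^m psi(y;m) follows from the recursions of
      p_n and psi; dividing yields f(y,i) = -1 + (y+1)/psi(y;n-i). *)

Set Implicit Arguments.
Unset Strict Implicit.

Lemma walk_size_head N y w : w \in walks N y -> size w = N.+1 /\ nth 0%N w 0 = y.
Proof.
elim: N y w => [|N IH] y w /=; first by rewrite inE => /eqP ->.
rewrite mem_cat => /orP [].
  by case/mapP => u /IH [size_u _] ->; rewrite /= size_u.
case: y => [|y] //.
by case/mapP => u /IH [size_u _] ->; rewrite /= size_u.
Qed.

Lemma walk_step N y w j : w \in walks N y -> (j < N)%N ->
  nth 0%N w j.+1 = (nth 0%N w j).+1
  \/ (0 < nth 0%N w j /\ nth 0%N w j.+1 = (nth 0%N w j).-1)%N.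
Proof.
elim: N y w j => [|N IH] y w j //=.
rewrite mem_cat => /orP [].
  case/mapP => u u_walk -> lt_jN; case: j lt_jN => [|j] lt_jN /=.
    by left; rewrite (walk_size_head u_walk).2.
  exact: IH u_walk _.
case: y => [|y] //.
case/mapP => u u_walk -> lt_jN; case: j lt_jN => [|j] lt_jN /=.
  by right; rewrite (walk_size_head u_walk).2.
exact: IH u_walk _.
Qed.

Lemma big_walksS (F : seq nat -> rat) N y :
  \sum_(w <- walks N.+1 y) F w = \sum_(u <- walks N y.+1) F (y :: u)
     + (if y is y'.+1 then \sum_(u <- walks N y') F (y'.+1 :: u) else 0).
Proof.
by rewrite /= big_cat big_map; case: y => [|y] /=; rewrite ?big_nil ?big_map ?addr0.
Qed.

Definition nwalks N y := size (walks N y).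

Lemma big_walks_head (g : nat -> rat) N y :
  \sum_(u <- walks N y) g (nth 0%N u 0) = (nwalks N y)%:R * g y.
Proof.
rewrite big_seq (eq_bigr (fun _ => g y)); last by move=> u /walk_size_head [_ ->].
by rewrite -big_seq big_const_seq count_predT iter_addr_0 mulr_natl.
Qed.

Lemma nwalksS N y : nwalks N.+1 y = (nwalks N y.+1 + (if y is y'.+1 then nwalks N y' else 0))%N.
Proof. by rewrite /nwalks /= size_cat size_map; case: y => [|y] //=; rewrite size_map. Qed.

Lemma nwalks_gt0 N y : (0 < (nwalks N y)%:R :> rat).
Proof.
rewrite ltr0n; elim: N y => [|N IH] y //.
by rewrite nwalksS; have := IH y.+1; lia.
Qed.

Lemma nwalks_neq0 N y : (nwalks N y)%:R != 0 :> rat.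
Proof. exact: lt0r_neq0 (nwalks_gt0 N y). Qed.

Definition pos_total N t y : rat := \sum_(w <- walks N y) (nth 0%N w t)%:R.

Definition mean_pos N t y : rat := Ewalk N y (fun w => (Scoord t w)%:R).

Lemma pos_totalE N t y : pos_total N t y = (nwalks N y)%:R * mean_pos N t y.
Proof. by rewrite mulrC divfK // nwalks_neq0. Qed.

Lemma pos_totalS N t y :
  pos_total N.+1 t.+1 y = pos_total N t y.+1 + (if y is y'.+1 then pos_total N t y' else 0).
Proof. by rewrite /pos_total big_walksS; case: y. Qed.

Lemma mean_pos0 N y : mean_pos N 0 y = y%:R.
Proof.
rewrite /mean_pos /Ewalk /Scoord (big_walks_head (fun z => z%:R)).
by rewrite [_ * y%:R]mulrC mulfK // nwalks_neq0.
Qed.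

(* Weighted average of g over the neighbours of y, each weighted by the number
   of walks of length N leaving it: the one-step transition of P^{N+1}_y. *)
Definition step_avg N (g : nat -> rat) y : rat :=
  ((nwalks N y.+1)%:R * g y.+1 + (if y is y'.+1 then (nwalks N y')%:R * g y' else 0))
  / (nwalks N.+1 y)%:R.

Lemma mean_posS N t y : mean_pos N.+1 t.+1 y = step_avg N (mean_pos N t) y.
Proof.
rewrite {1}/mean_pos /Ewalk -/(pos_total _ _ _) -/(nwalks _ _) pos_totalS /step_avg.
by case: y => [|y] /=; rewrite -?pos_totalE ?addr0.
Qed.

Lemma no_common_prefix N b b' u0 j : u0 \in walks N b' -> b != b' ->
  [seq u <- walks N b | take j.+1 u == take j.+1 u0] = [::].
Proof.
move=> u0_walk neq_bb'; apply/eqP; rewrite -(negbK (_ == [::])) -has_filter.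
apply/hasPn => u u_walk; apply/negP => /eqP same_prefix.
have := congr1 (fun s => nth 0%N s 0) same_prefix.
rewrite /= !nth_take // (walk_size_head u_walk).2 (walk_size_head u0_walk).2 => eq_bb'.
by rewrite eq_bb' eqxx in neq_bb'.
Qed.

Lemma walks_prefix N y w0 j : w0 \in walks N y -> (j <= N)%N ->
  [seq w <- walks N y | take j.+1 w == take j.+1 w0]
  = [seq take j w0 ++ u | u <- walks (N - j) (nth 0%N w0 j)].
Proof.
elim: j N y w0 => [|j IH] N y w0 w0_walk le_jN.
  rewrite take0 subn0 (walk_size_head w0_walk).2 map_id.
  have first_pos w : w \in walks N y -> take 1 w = [:: y].
    case: w => [|a u] w_walk; first by have := (walk_size_head w_walk).1.
    by rewrite /= take0 -(walk_size_head w_walk).2.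
  rewrite (first_pos _ w0_walk) (eq_in_filter (a2 := predT)) ?filter_predT //.
  by move=> w w_walk; rewrite first_pos ?eqxx.
case: N w0_walk le_jN => [|N] //= w0_walk le_jN.
rewrite filter_cat filter_map.
have drop_head u0 b :
    [seq u <- walks N b | preim (cons y) (fun w => take j.+2 w == take j.+2 (y :: u0)) u]
    = [seq u <- walks N b | take j.+1 u == take j.+1 u0].
  by apply: eq_filter => u; rewrite /= eqseq_cons eqxx.
move: w0_walk; rewrite mem_cat => /orP [].
  case/mapP => u0 u0_walk ->.
  rewrite drop_head (IH _ _ _ u0_walk) // -map_comp.
  case: y u0_walk drop_head => [|y] u0_walk drop_head; first by rewrite cats0.
  by rewrite filter_map drop_head (@no_common_prefix N _ _ u0 j u0_walk) ?cats0 //; lia.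
case: y drop_head => [|y] drop_head //.
case/mapP => u0 u0_walk ->.
rewrite drop_head (@no_common_prefix N _ _ u0 j u0_walk) ?filter_map ?drop_head
  ?(IH _ _ _ u0_walk) // -?map_comp //.
lia.
Qed.

(* Conditional on its first i+1 positions, the next position of the uniform walk
   is distributed according to step_avg: the prefix is forgotten. *)
Lemma cond_exp_next n x (g : nat -> rat) i w : (i < n)%N -> w \in walks n x ->
  cond_exp n x (fun w => g (Scoord i.+1 w)) (take i.+1 w)
  = step_avg (n - i.+1) g (Scoord i w).
Proof.
move=> lt_in w_walk; have [size_w _] := walk_size_head w_walk.
rewrite /cond_exp size_takel ?size_w //; last by lia.
rewrite -big_filter -size_filter (walks_prefix w_walk) ?big_map ?size_map; last by lia.
have next_pos u : Scoord i.+1 (take i w ++ u) = nth 0%N u 1.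
  by rewrite /Scoord nth_cat size_takel ?size_w; [rewrite ltnNge leqnSn /= subSnn | lia].
under eq_bigr => u _ do rewrite next_pos.
have -> : (n - i = (n - i.+1).+1)%N by lia.
rewrite /step_avg /Scoord -/(nwalks _ _) big_walksS /= (big_walks_head (fun z => g z)).
by case: (nth 0%N w i) => [|y] //=; rewrite (big_walks_head (fun z => g z)).
Qed.

(* Concavity of N_m along steps of 2, for the extension N_m(-1) = 0,
   N_m(-2) = -N_m(0) given by the reflection principle. *)
Lemma nwalks_concave m :
  (forall z, nwalks m z.+3 + (if z is z'.+1 then nwalks m z' else 0) <= 2 * nwalks m z.+1)%N
  /\ (nwalks m 2 <= 3 * nwalks m 0)%N.
Proof.
elim: m => [|m [concave boundary]]; first by split=> // -[|z].
split; last by rewrite !nwalksS /=; have := concave 0%N; rewrite /=; lia.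
case=> [|z]; first by rewrite !nwalksS /=; have := concave 1%N; rewrite /=; lia.
rewrite !nwalksS /=; have := concave z.+2; have := concave z; rewrite /=.
by case: z => [|z] /=; rewrite ?nwalksS /=; lia.
Qed.

(* Hence, by the AM-GM inequality, N_m is log-concave along steps of 2. *)
Lemma nwalks_logconcave m z : (nwalks m z.+4 * nwalks m z <= nwalks m z.+2 * nwalks m z.+2)%N.
Proof.
have := (nwalks_concave m).1 z.+1; rewrite /=.
set a := nwalks m z.+4; set b := nwalks m z.+2; set c := nwalks m z => concave.
have sq_le : ((a + c) * (a + c) <= (2 * b) * (2 * b))%N by apply: leq_mul.
have amgm : (4 * (a * c) <= (a + c) * (a + c))%N.
  case: (leqP a c) => cmp_ac.
    have -> : c = (a + (c - a))%N by lia.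
    set d := (c - a)%N; nia.
  have -> : a = (c + (a - c))%N by lia.
  set d := (a - c)%N; nia.
nia.
Qed.

Section WeightedAverages.
Variable R : realFieldType.

Lemma avg_gap (a b c F3 F1 F0 : R) : 0 <= a -> 0 < b -> 0 <= c -> a * c <= b * b ->
  0 <= F3 - F1 <= 2 -> 0 <= F1 - F0 <= 2 ->
  0 <= (a * F3 + b * F1) / (a + b) - (b * F1 + c * F0) / (b + c) <= 2.
Proof.
move=> a_ge0 b_gt0 c_ge0 logconcave /andP[gap31_ge0 gap31_le2] /andP[gap10_ge0 gap10_le2].
have ab_gt0 : 0 < a + b by rewrite ltr_wpDl.
have bc_gt0 : 0 < b + c by rewrite ltr_wpDr.
have ab_neq0 := lt0r_neq0 ab_gt0; have bc_neq0 := lt0r_neq0 bc_gt0.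
set u := a / (a + b); set v := c / (b + c).
have -> : (a * F3 + b * F1) / (a + b) - (b * F1 + c * F0) / (b + c)
    = u * (F3 - F1) + v * (F1 - F0).
  by rewrite /u /v; field; rewrite ab_neq0 bc_neq0.
have u_ge0 : 0 <= u by rewrite divr_ge0 // ltW.
have v_ge0 : 0 <= v by rewrite divr_ge0 // ltW.
have uv_le1 : 0 <= 1 - (u + v).
  have -> : 1 - (u + v) = (b * b - a * c) / ((a + b) * (b + c)).
    by rewrite /u /v; field; rewrite ab_neq0 bc_neq0.
  by rewrite divr_ge0 ?subr_ge0 // ltW // mulr_gt0.
by apply/andP; split; nra.
Qed.

Lemma avg_near (b c F1 F0 : R) : 0 < b -> 0 <= c -> 0 <= F1 - F0 <= 2 ->
  `|F1 - (b * F1 + c * F0) / (b + c)| <= 2 /\ `|F0 - (b * F1 + c * F0) / (b + c)| <= 2.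
Proof.
move=> b_gt0 c_ge0 /andP[gap_ge0 gap_le2].
have bc_gt0 : 0 < b + c by rewrite ltr_wpDr.
have bc_neq0 := lt0r_neq0 bc_gt0.
set v := c / (b + c).
have v_ge0 : 0 <= v by rewrite divr_ge0 // ltW.
have v_le1 : v <= 1 by rewrite ler_pdivrMr // mul1r lerDr ltW.
have -> : F1 - (b * F1 + c * F0) / (b + c) = v * (F1 - F0) by rewrite /v; field.
have -> : F0 - (b * F1 + c * F0) / (b + c) = - ((1 - v) * (F1 - F0)) by rewrite /v; field.
by rewrite normrN !ger0_norm; first split; nra.
Qed.

End WeightedAverages.

Lemma step_avgE N (g : nat -> rat) y : step_avg N g y =
  ((nwalks N y.+1)%:R * g y.+1 + (if y is y'.+1 then (nwalks N y')%:R * g y' else 0))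
  / ((nwalks N y.+1)%:R + (if y is y'.+1 then (nwalks N y')%:R else 0)).
Proof. by rewrite /step_avg nwalksS natrD; case: y. Qed.

Lemma mean_pos_gap t m : (t <= m)%N -> forall z, 0 <= mean_pos m t z.+2 - mean_pos m t z <= 2.
Proof.
elim: t m => [|t IH] m le_tm z.
  by rewrite !mean_pos0 -[z.+2]addn2 natrD addrAC subrr add0r lexx.
case: m le_tm => [|m] // le_tm; have gap := IH m le_tm.
rewrite !mean_posS !step_avgE /=.
case: z => [|z].
  have := @avg_gap _ (nwalks m 3)%:R (nwalks m 1)%:R 0
    (mean_pos m t 3) (mean_pos m t 1) (mean_pos m t 1).
  rewrite mul0r !addr0; apply; rewrite ?ler0n ?nwalks_gt0 ?mulr0 ?mul0r ?mulr_ge0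
    ?ler0n ?subrr ?lexx //; exact: gap.
apply: avg_gap; rewrite ?ler0n ?nwalks_gt0 //; try exact: gap.
by rewrite -!natrM ler_nat nwalks_logconcave.
Qed.

Lemma mean_pos_step m t y y' : (t <= m)%N ->
  y' = y.+1 \/ (0 < y /\ y' = y.-1)%N ->
  `|mean_pos m t y' - step_avg m (mean_pos m t) y| <= 2.
Proof.
move=> le_tm neighbour; rewrite step_avgE.
case: y neighbour => [|y] /=.
  case=> [-> | [//]].
  by rewrite !addr0 mulrC mulKf ?nwalks_neq0 // subrr normr0 ler0n.
have [up down] := avg_near (nwalks_gt0 m y.+2) (ler0n _ (nwalks m y)) (mean_pos_gap le_tm y).
by case=> [-> | [_ ->]].
Qed.

(* For t = m: sum_w (S_m + 1) = (y+1) 2^m, since each step of the recursion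
   pushes the mass y+1 to the two neighbours (and 0 at the boundary). *)
Lemma pos_total_diag m y : pos_total m m y + (nwalks m y)%:R = (y.+1)%:R * 2 ^+ m.
Proof.
elim: m y => [|m IH] y.
  by rewrite /pos_total big_seq1 expr0 mulr1 -natrD addn1.
rewrite pos_totalS nwalksS natrD; case: y => [|y] /=.
  by rewrite !addr0 IH exprS mulrA.
rewrite addrACA !IH exprS mulrA -mulrDl -!natrD -natrM; congr (_%:R * _); lia.
Qed.

Lemma pn_out m w : (m < `|w|)%N -> pn m w = 0.
Proof. by rewrite /pn => ->; rewrite orbT. Qed.

Lemma pnN m w : pn m (- w) = pn m w.
Proof. by rewrite /pn abszN. Qed.

Lemma pn_nat m a :
  pn m (Posz a) = if odd (m + a) then 0 else 'C(m, (m + a)./2)%:R / 2 ^+ m.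
Proof.
rewrite /pn /=; case odd_ma: (odd (m + a)) => //=.
case: ifP => lt_ma //=.
have := odd_double_half (m + a); rewrite odd_ma add0n -addnn => half_ma.
by rewrite bin_small ?mul0r //; lia.
Qed.

Lemma pnS_pos m a : pn m.+1 (Posz a.+1) = (pn m (Posz a) + pn m (Posz a.+2)) / 2.
Proof.
rewrite !pn_nat !addnS addSn /= negbK.
case: ifP => _; first by rewrite addr0 mul0r.
by rewrite binS natrD exprS mulrDl; field; exact: expf_neq0.
Qed.

Lemma pnS0 m : pn m.+1 0 = pn m 1.
Proof.
rewrite !pn_nat addn0 addn1.
case: ifP => // odd_m1; move: odd_m1; rewrite /= => /negbFE odd_m.
have := odd_double_half m; rewrite odd_m add1n => half_m.
rewrite -half_m /= doubleK binS exprS.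
have -> : 'C((m./2).*2.+1, m./2) = 'C((m./2).*2.+1, (m./2).+1).
  rewrite -[in RHS]bin_sub; last by rewrite -addnn; lia.
  by congr 'C(_, _); rewrite -addnn; lia.
by rewrite natrD; field; exact: expf_neq0.
Qed.

Lemma pnS m w : pn m.+1 w = (pn m (w - 1) + pn m (w + 1)) / 2.
Proof.
case: w => a.
  case: a => [|a].
    by rewrite pnS0 sub0r pnN add0r; field.
  have -> : Posz a.+1 - 1 = Posz a by lia.
  have -> : Posz a.+1 + 1 = Posz a.+2 by lia.
  exact: pnS_pos.
have -> : Negz a - 1 = - Posz a.+2 by lia.
have -> : Negz a + 1 = - Posz a by lia.
have -> : Negz a = - Posz a.+1 by lia.
by rewrite !pnN pnS_pos addrC.
Qed.

(* Backward equation for the killed kernel p^{(1/2)}: the reflected term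
   cancels the step from 0 to -1. *)
Lemma phalfS m y z :
  phalf m.+1 y z = (phalf m y.+1 z + (if y is y'.+1 then phalf m y' z else 0)) / 2.
Proof.
rewrite /phalf !pnS; case: y => [|y].
  have -> : Posz 0 - Posz z - 1 = - (Posz 0 + Posz z + 2 - 1) by lia.
  have -> : Posz 0 - Posz z + 1 = Posz 1 - Posz z by lia.
  have -> : Posz 0 + Posz z + 2 + 1 = Posz 1 + Posz z + 2 by lia.
  by rewrite pnN; field.
have -> : Posz y.+1 - Posz z - 1 = Posz y - Posz z by lia.
have -> : Posz y.+1 - Posz z + 1 = Posz y.+2 - Posz z by lia.
have -> : Posz y.+1 + Posz z + 2 + 1 = Posz y.+2 + Posz z + 2 by lia.
have -> : Posz y.+1 + Posz z + 2 - 1 = Posz y + Posz z + 2 by lia.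
by field.
Qed.

Lemma phalf_out m y z : (y + m < z)%N -> phalf m y z = 0.
Proof.
move=> far; rewrite /phalf.
have -> : Posz y - Posz z = - Posz (z - y)%N by lia.
have -> : Posz y + Posz z + 2 = Posz (y + z + 2)%N by lia.
by rewrite pnN !pn_out ?subrr //=; lia.
Qed.

Lemma psi_wide m y L : (y + m + 1 <= L)%N -> \sum_(0 <= z < L) phalf m y z = psi y m.
Proof.
move=> wide; rewrite /psi (big_cat_nat (leq0n _) wide) /= [X in _ + X]big1_seq ?addr0 //.
move=> z /andP[_]; rewrite mem_index_iota => /andP[far _]; apply: phalf_out; lia.
Qed.

Lemma psiS m y : psi y m.+1 = (psi y.+1 m + (if y is y'.+1 then psi y' m else 0)) / 2.
Proof.
rewrite -(@psi_wide m.+1 y (y + m + 3)); last by lia.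
under eq_bigr => z _ do rewrite phalfS.
rewrite -big_distrl big_split /= psi_wide; last by lia.
case: y => [|y]; first by rewrite big1 // addr0.
by rewrite psi_wide //; lia.
Qed.

Lemma psi0 y : psi y 0 = 1.
Proof.
rewrite /psi addn0 addn1 big_nat_recr //= big1_seq ?add0r.
  rewrite /phalf subrr [pn 0 (Posz y + _ + _)]pn_out; last by rewrite /=; lia.
  by rewrite /pn /= expr0 divr1 subr0.
move=> z /andP[_]; rewrite mem_index_iota => /andP[_ lt_zy].
rewrite /phalf !pn_out ?subrr //.
  have -> : Posz y + Posz z + 2 = Posz (y + z + 2)%N by lia.
  by rewrite /=; lia.
have -> : Posz y - Posz z = Posz (y - z)%N by lia.
by rewrite /=; lia.
Qed.

(* Reflection principle: N_m(y) = 2^m psi(y;m), both sides obeying the same recursion. *)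
Lemma nwalks_psi m y : (nwalks m y)%:R = psi y m * 2 ^+ m.
Proof.
elim: m y => [|m IH] y; first by rewrite psi0 mulr1.
rewrite nwalksS natrD psiS IH exprS; case: y => [|y] /=.
  by rewrite !addr0; field.
by rewrite IH; field.
Qed.

Lemma mean_pos_diag m y : mean_pos m m y = -1 + (y.+1)%:R / psi y m.
Proof.
have psi_eq : psi y m = (nwalks m y)%:R / 2 ^+ m.
  by rewrite nwalks_psi mulfK // expf_neq0.
rewrite /mean_pos /Ewalk -/(pos_total _ _ _) -/(nwalks _ _).
have -> : pos_total m m y = (y.+1)%:R * 2 ^+ m - (nwalks m y)%:R.
  by rewrite -pos_total_diag addrK.
by rewrite psi_eq; field; rewrite nwalks_neq0 expf_neq0.
Qed.

Lemma fexp_backward n k y i : (i < k)%N -> (k <= n)%N ->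
  fexp n k y i = step_avg (n - i.+1) (fun z => fexp n k z i.+1) y.
Proof.
move=> lt_ik le_kn; rewrite [LHS]/fexp -/(mean_pos (n - i) (k - i) y).
have -> : (n - i = (n - i.+1).+1)%N by lia.
have -> : (k - i = (k - i.+1).+1)%N by lia.
exact: mean_posS.
Qed.

Unset Implicit Arguments.

Theorem propositionA6 (n k x : nat) (hkn : (k <= n)%N) :
  martingale_walks n x k (fun i w => fexp n k (Scoord i w) i)
  /\ (forall i w, (i < k)%N -> w \in walks n x ->
        `|fexp n k (Scoord i.+1 w) i.+1 - fexp n k (Scoord i w) i| <= 2%:R)
  /\ (k = n -> forall i y, (i <= k)%N ->
        fexp n k y i = -1 + (y.+1)%:R / psi y (n - i)).
Proof.
split; [split | split].
-
  move=> i w w' _ _ _ same_prefix; rewrite /Scoord.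
  by rewrite -(nth_take 0%N (ltnSn i) w) same_prefix nth_take.
- (* Martingale property: backward equation + Markov property of P^n_x. *)
  move=> i w lt_ik w_walk; rewrite fexp_backward //.
  by apply: (cond_exp_next (fun z => fexp n k z i.+1)) w_walk; lia.
- (* Bounded increments: S_{i+1} is a neighbour of S_i. *)
  move=> i w lt_ik w_walk; rewrite [fexp n k (Scoord i w) i]fexp_backward //.
  apply: mean_pos_step; first by lia.
  by apply: walk_step w_walk _; lia.
-
  by move=> eq_kn i y _; subst k; exact: mean_pos_diag.
Qed.
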